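(* Let $p$ and $q$ be distinct primes, $n=pq$, and let $e$ be a positive integer with $\gcd(e,\varphi(n))=1$ (so that there is an integer $d$ with $ed\equiv 1 \pmod{\varphi(n)}$). For a positive integer $k$, let $$T_{n,e,k}=\{x\in \mathbb{Z}_n^{\ast} : x^{e^{k}}\equiv x \pmod n \text{ and } x^{e^{m}}\not\equiv x \pmod n \text{ for every positive integer } m<k\}.$$ Then $$|T_{n,e,k}|=\sum_{d\mid k}\mu(k/d)\,\gcd(e^{d}-1,p-1)\,\gcd(e^{d}-1,q-1),$$ where the sum runs over the positive divisors $d$ of $k$ and $\mu$ is the Möbius function.
   Context: $\mathbb{Z}_n^{\ast}$ denotes a reduced residue system modulo $n$ (the residues coprime to $n$), $\varphi$ is Euler's totient function, and $\gcd(a,b)$ is the greatest common divisor (with $\gcd(0,b)=b$). *)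

From mathcomp Require Import all_boot all_order all_algebra.
Set Implicit Arguments. Unset Strict Implicit. Unset Printing Implicit Defensive.
Import GRing.Theory Num.Theory.
Local Open Scope ring_scope.

Definition squarefreeb (n : nat) : bool :=
  all (fun p => logn p n == 1)%N (primes n).

Definition mobius (n : nat) : int :=
  if (n == 0)%N then 0
  else if squarefreeb n then (-1) ^+ size (primes n) else 0.

Definition Tset (n e k : nat) : {set 'I_n} :=
  [set x : 'I_n | [&& coprime x n,
     (x ^ (e ^ k) == x %[mod n])%N &
     [forall m : 'I_k, (0 < m)%N ==> (x ^ (e ^ m) != x %[mod n])%N]]].

From mathcomp Require Import all_boot all_order all_algebra all_fingroup all_solvable.
Set Implicit Arguments. Unset Strict Implicit. Unset Printing Implicit Defensive.
Import GRing.Theory Num.Theory.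

(* Since e is coprime to phi(n), the map x |-> x^e permutes the units mod n,
   and T_{n,e,k} is the set of units whose orbit under it has length exactly k.
   Hence the number F(m) of units with x^(e^m) = x is the sum of |T_{n,e,d}|
   over the divisors d of m, and the theorem is Moebius inversion of this
   identity.  By the Chinese remainder theorem, F(m) is the product of the
   numbers of units x mod p and mod q with x^(e^m - 1) = 1; since the units
   mod a prime p form a cyclic group of order p - 1, the latter number is
   gcd(e^m - 1, p - 1). *)

Lemma prime_primitive_root p : prime p -> exists2 g, coprime g p &
  forall i j, (g ^ i == g ^ j %[mod p]) = (i == j %[mod p.-1]).
Proof.
move=> p_pr; have p_gt1 := prime_gt1 p_pr.
case/cyclicP: (units_Zp_cyclic p_pr) => u defU.
have order_u : #[u]%g = p.-1.
  by rewrite /order -defU card_units_Zp ?totient_prime // ltnW.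
have val_uX i : (val (val (u ^+ i)%g) : nat) = (val (val u) ^ i) %% p.
  by rewrite FinRing.val_unitX -val_Zp_nat // natrX natr_Zp.
exists (val (val u)).
  have := unitZpE (val (val u)) p_gt1; rewrite natr_Zp coprime_sym => <-.
  exact: valP u.
move=> i j; rewrite -order_u -eq_expg_mod_order -!val_uX.
by apply/eqP/eqP => [E|-> //]; apply/val_inj/val_inj.
Qed.

Lemma card_ord_mul_dvd N a : 0 < N -> #|[set i : 'I_N | N %| i * a]| = gcdn a N.
Proof.
move=> N_gt0; set g := gcdn a N.
have g_gt0 : 0 < g by rewrite gcdn_gt0 N_gt0 orbT.
set N' := N %/ g; set a' := a %/ g.
have defN : N = N' * g by rewrite divnK // dvdn_gcdr.
have defa : a = a' * g by rewrite divnK // dvdn_gcdl.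
have N'_gt0 : 0 < N' by move: N_gt0; rewrite defN muln_gt0 => /andP[].
have co_a'N' : coprime a' N'.
  by rewrite /coprime -(eqn_pmul2r g_gt0) muln_gcdl -defa -defN mul1n.
have mulN'_lt (j : 'I_g) : j * N' < N by rewrite defN mulnC ltn_pmul2l.
have -> : [set i : 'I_N | N %| i * a] = (fun j => Ordinal (mulN'_lt j)) @: setT.
  apply/setP => i; rewrite inE [X in X %| _]defN defa mulnA dvdn_pmul2r //.
  rewrite Gauss_dvdl 1?coprime_sym //.
  apply/idP/imsetP => [dvN'i|[j _ ->]]; last by rewrite /= dvdn_mull.
  have lt_i_g : i %/ N' < g by rewrite ltn_divLR // mulnC -defN.
  by exists (Ordinal lt_i_g) => //; apply/val_inj; rewrite /= divnK.
rewrite card_imset ?cardsT ?card_ord // => j k /(congr1 val) /= /eqP.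
by rewrite eqn_pmul2r // => /eqP/val_inj.
Qed.

Lemma card_roots_of_unity_mod_prime p a : prime p ->
  #|[set x : 'I_p | coprime x p && (x ^ a == 1 %[mod p])]| = gcdn a p.-1.
Proof.
move=> p_pr; have p_gt0 := prime_gt0 p_pr.
have pm1_gt0 : 0 < p.-1 by rewrite -subn1 subn_gt0 prime_gt1.
have [g co_gp log_g] := prime_primitive_root p_pr.
pose pow_g (i : 'I_p.-1) : 'I_p := Ordinal (ltn_pmod (g ^ i) p_gt0).
have pow_g_inj : injective pow_g.
  move=> i j /(congr1 val) /= /eqP; rewrite log_g => /eqP.
  by rewrite !modn_small // => /val_inj.
pose units := [set x : 'I_p | coprime x p].
have card_units : #|units| = p.-1.
  have -> : units = [set~ Ordinal p_gt0].
    by apply/setP => x; rewrite !inE coprime_sym prime_coprime // /dvdn modn_small.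
  by rewrite cardsC1 card_ord.
have im_pow_g : pow_g @: setT = units.
  apply/eqP; rewrite eqEcard card_imset // cardsT card_ord card_units leqnn andbT.
  by apply/subsetP => _ /imsetP[i _ ->]; rewrite inE coprime_modl coprimeXl.
have pow_gX1 i : ((pow_g i) ^ a == 1 %[mod p]) = (p.-1 %| i * a).
  by rewrite /= modnXm -expnM -(expn0 g) log_g mod0n.
rewrite -(card_ord_mul_dvd a pm1_gt0) -(card_imset _ pow_g_inj).
apply: eq_card => x; rewrite inE; apply/andP/imsetP => [[co_xp xa1]|[i]].
  have : x \in units by rewrite inE.
  rewrite -im_pow_g => /imsetP[i _ defx]; exists i => //.
  by rewrite inE -pow_gX1 -defx.
rewrite inE -pow_gX1 => ia1 ->; split=> //.
by rewrite /= coprime_modl coprimeXl.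
Qed.

Lemma card_chinese m n (P Q : nat -> bool) : coprime m n -> 0 < m -> 0 < n ->
  #|[set x : 'I_(m * n) | P (x %% m) && Q (x %% n)]| =
  #|[set x : 'I_m | P x]| * #|[set y : 'I_n | Q y]|.
Proof.
move=> co_mn m_gt0 n_gt0.
pose f (x : 'I_(m * n)) : 'I_m * 'I_n :=
  (Ordinal (ltn_pmod x m_gt0), Ordinal (ltn_pmod x n_gt0)).
have f_inj : injective f.
  move=> x y [] /eqP eq_xy_m /eqP eq_xy_n; apply/val_inj/eqP.
  by have := chinese_remainder co_mn x y; rewrite eq_xy_m eq_xy_n !modn_small.
have f_onto z : z \in codom f.
  by apply: inj_card_onto => //; rewrite card_prod !card_ord.
rewrite -cardsX -(card_imset _ f_inj); apply: eq_card => z.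
apply/imsetP/idP => [[x]|].
  by rewrite !inE => /andP[Px Qx] ->; rewrite /= Px Qx.
rewrite !inE /= => /andP[Pz Qz]; have /codomP[x defz] := f_onto z.
by exists x => //; rewrite inE; move: Pz Qz; rewrite defz /= => -> ->.
Qed.

Lemma eqn_modMr_coprime n x a b : coprime x n ->
  (a * x == b * x %[mod n]) = (a == b %[mod n]).
Proof.
move=> co_xn; wlog le_ba : a b / b <= a.
  move=> IH; case: (leqP b a) => [|/ltnW] le; first exact: IH.
  by rewrite eq_sym [RHS]eq_sym; apply: IH.
by rewrite !eqn_mod_dvd ?leq_mul2r ?le_ba ?orbT // -mulnBl Gauss_dvdl // coprime_sym.
Qed.

Lemma expn_fixed_mod_coprime n x E : 0 < E -> coprime x n ->
  (x ^ E == x %[mod n]) = ((x %% n) ^ E.-1 == 1 %[mod n]).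
Proof.
move=> E_gt0 co_xn; rewrite modnXm -[E in x ^ E]prednK // expnSr.
by rewrite -[X in _ == X %[mod _]](mul1n x) eqn_modMr_coprime.
Qed.

Lemma card_fixed_expn_pq p q E : prime p -> prime q -> p != q -> 0 < E ->
  #|[set x : 'I_(p * q) | coprime x (p * q) && (x ^ E == x %[mod p * q])]|
  = gcdn E.-1 p.-1 * gcdn E.-1 q.-1.
Proof.
move=> p_pr q_pr p_neq_q E_gt0.
have co_pq : coprime p q by rewrite prime_coprime // dvdn_prime2.
pose root1 r a := coprime a r && (a ^ E.-1 == 1 %[mod r]).
rewrite -!card_roots_of_unity_mod_prime //.
rewrite -(card_chinese (root1 p) (root1 q)) ?prime_gt0 //.
apply: eq_card => x; rewrite !inE /root1 !coprime_modl coprimeMr chinese_remainder //.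
have [co_xp|] //= := boolP (coprime x p); have [co_xq|] //= := boolP (coprime x q).
  by rewrite !expn_fixed_mod_coprime.
by rewrite !andbF.
Qed.

Lemma period_dvdn (P : nat -> bool) :
  (forall a b, P a -> P (a + b) = P b) -> (exists2 t, 0 < t & P t) ->
  exists2 o, 0 < o & forall m, P m = (o %| m).
Proof.
move=> P_shift [t t_gt0 Pt].
have P0 : P 0 by rewrite -(P_shift t) ?addn0.
have exP : exists m, (0 < m) && P m by exists t; rewrite t_gt0.
case: (ex_minnP exP) => o /andP[o_gt0 Po] o_min; exists o => // m.
elim/ltn_ind: m => m IHm; have [lt_mo|le_om] := ltnP m o.
  case: m lt_mo {IHm} => [|m] lt_mo; first by rewrite P0 dvdn0.
  rewrite [o %| _]negbTE; last by apply/negP => /dvdn_leq => /(_ isT); rewrite leqNgt lt_mo.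
  by apply/negbTE/negP => Pm; have := o_min m.+1; rewrite Pm => /(_ isT); rewrite leqNgt lt_mo.
rewrite -(subnKC le_om) P_shift // dvdn_addr // IHm //.
by rewrite ltn_subrL o_gt0 (leq_trans o_gt0 le_om).
Qed.

Lemma expn_totient_totient_mod n e x : 2 < n ->
  coprime e (totient n) -> coprime x n -> x ^ (e ^ totient (totient n)) = x %[mod n].
Proof.
move=> n_gt2 co_e co_x; set phi := totient n.
have phi_gt1 : 1 < phi by rewrite totient_gt1.
have Ee : e ^ totient phi %% phi = 1 by rewrite Euler_exp_totient // modn_small.
have Ex : x ^ phi %% n = 1 %% n := Euler_exp_totient co_x.
rewrite (divn_eq (e ^ totient phi) phi) Ee expnD mulnC expnM expn1.
by rewrite -expnM [_ %/ _ * _]mulnC expnM -modnMmr -modnXm Ex modnXm exp1n modnMmr muln1.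
Qed.

Lemma expn_iter_period n e x : 2 < n -> coprime e (totient n) -> coprime x n ->
  exists2 o, 0 < o & forall m, (x ^ (e ^ m) == x %[mod n]) = (o %| m).
Proof.
move=> n_gt2 co_e co_x; apply: period_dvdn => [a b /eqP fix_a|].
  by rewrite expnD expnM -modnXm fix_a modnXm.
exists (totient (totient n)); first by rewrite !totient_gt0 (ltn_trans _ n_gt2).
by apply/eqP/expn_totient_totient_mod.
Qed.

Lemma mem_Tset_period n e (x : 'I_n) d o : 0 < d -> 0 < o -> coprime x n ->
  (forall m, (x ^ (e ^ m) == x %[mod n]) = (o %| m)) ->
  (x \in Tset n e d) = (d == o).
Proof.
move=> d_gt0 o_gt0 co_x period_o; rewrite inE co_x period_o /=.
apply/andP/eqP => [[o_dvd_d /forallP not_fixed]|->].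
  apply/eqP; apply: contraT => d_neq_o.
  have lt_od : o < d by rewrite ltn_neqAle eq_sym d_neq_o dvdn_leq.
  by have := not_fixed (Ordinal lt_od); rewrite /= o_gt0 period_o dvdnn.
split=> //; apply/forallP => j; apply/implyP => j_gt0.
by rewrite period_o; apply: contraTN (ltn_ord j) => /dvdn_leq => /(_ j_gt0); rewrite leqNgt.
Qed.

Lemma card_fixed_sum_Tset n e m : 2 < n -> coprime e (totient n) -> 0 < m ->
  #|[set x : 'I_n | coprime x n && (x ^ (e ^ m) == x %[mod n])]| =
  \sum_(d <- divisors m) #|Tset n e d|.
Proof.
move=> n_gt2 co_e m_gt0.
rewrite -sum1_card big_mkcond /=.
under [in RHS]eq_bigr do rewrite -sum1_card big_mkcond /=.
rewrite exchange_big /=; apply: eq_bigr => x _; rewrite inE.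
have [co_x|not_co_x] := boolP (coprime x n); last first.
  by rewrite big1 // => d _; rewrite inE (negbTE not_co_x).
have [o o_gt0 period_o] := expn_iter_period n_gt2 co_e co_x.
rewrite period_o (eq_big_seq (fun d => nat_of_bool (d == o))); last first.
  move=> d; rewrite -dvdn_divisors // => /(dvdn_gt0 m_gt0) d_gt0.
  by rewrite (mem_Tset_period d_gt0 o_gt0 co_x period_o); case: (d == o).
rewrite -big_mkcond /= sum1_count count_uniq_mem ?divisors_uniq //.
by rewrite -dvdn_divisors.
Qed.

Lemma perm_divisors_multiples r n : 0 < r -> r %| n -> 0 < n ->
  perm_eq [seq d <- divisors n | r %| d] (map (muln r) (divisors (n %/ r))).
Proof.
move=> r_gt0 r_dvd_n n_gt0; have nr_gt0 : 0 < n %/ r by rewrite divn_gt0 // dvdn_leq.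
apply: uniq_perm; first by rewrite filter_uniq ?divisors_uniq.
  by rewrite map_inj_uniq ?divisors_uniq // => a b /eqP; rewrite eqn_pmul2l // => /eqP.
move=> d; rewrite mem_filter -dvdn_divisors //; apply/andP/mapP => [[r_dvd_d d_dvd_n]|[j]].
  by exists (d %/ r); rewrite 1?mulnC ?divnK // -dvdn_divisors // dvdn_divRL // divnK.
rewrite -dvdn_divisors // => j_dvd ->; split; first exact: dvdn_mulr.
by rewrite -[n in _ %| n](divnK r_dvd_n) mulnC dvdn_pmul2r.
Qed.

Lemma perm_divisors_prime_coprime r n : prime r -> r %| n -> 0 < n ->
  perm_eq [seq d <- divisors n | ~~ (r %| d)] [seq d <- divisors (n %/ r) | ~~ (r %| d)].
Proof.
move=> r_pr r_dvd_n n_gt0.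
have nr_gt0 : 0 < n %/ r by rewrite divn_gt0 ?prime_gt0 // dvdn_leq.
apply: uniq_perm; rewrite ?filter_uniq ?divisors_uniq //.
move=> d; rewrite !mem_filter -!dvdn_divisors //.
have [//|r_ndvd_d /=] := boolP (r %| d).
have co_dr : coprime d r by rewrite coprime_sym prime_coprime.
by rewrite -{1}(divnK r_dvd_n) Gauss_dvdl.
Qed.

Lemma perm_divisors_dvd d k : d %| k -> 0 < k ->
  perm_eq [seq c <- divisors k | c %| d] (divisors d).
Proof.
move=> d_dvd_k k_gt0; have d_gt0 := dvdn_gt0 k_gt0 d_dvd_k.
apply: uniq_perm; rewrite ?filter_uniq ?divisors_uniq //.
move=> c; rewrite mem_filter -!dvdn_divisors //.
by apply/andP/idP => [[]//|c_dvd_d]; split=> //; apply: dvdn_trans d_dvd_k.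
Qed.

Lemma divn_divn_divisor m j : j %| m -> 0 < m -> m %/ (m %/ j) = j.
Proof. by move=> j_dvd_m m_gt0; rewrite divnA // mulKn // (dvdn_gt0 m_gt0). Qed.

Lemma perm_divisors_codivisors m : 0 < m ->
  perm_eq (map (fun j => m %/ j) (divisors m)) (divisors m).
Proof.
move=> m_gt0; apply: uniq_perm; rewrite ?divisors_uniq //.
  rewrite map_inj_in_uniq ?divisors_uniq // => a b.
  rewrite -!dvdn_divisors // => a_dvd b_dvd eq_ab.
  by rewrite -(divn_divn_divisor a_dvd m_gt0) eq_ab divn_divn_divisor.
move=> d; apply/mapP/idP => [[j]|d_in].
  by rewrite -!dvdn_divisors // => j_dvd ->; apply: dvdn_div.
rewrite -dvdn_divisors // in d_in.
by exists (m %/ d); rewrite ?divn_divn_divisor // -dvdn_divisors // dvdn_div.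
Qed.

Local Open Scope ring_scope.

Lemma mobiusM_prime_coprime r d : prime r -> ~~ (r %| d)%N ->
  mobius (r * d) = - mobius d.
Proof.
move=> r_pr r_ndvd_d; have d_gt0 : (0 < d)%N by case: d r_ndvd_d; rewrite ?dvdn0.
have rd_gt0 : (0 < r * d)%N by rewrite muln_gt0 prime_gt0.
have r_notin : r \notin primes d by rewrite mem_primes r_pr d_gt0.
have primes_rd : perm_eq (primes (r * d)) (r :: primes d).
  apply: uniq_perm; rewrite /= ?r_notin ?primes_uniq // => z.
  rewrite in_cons !mem_primes rd_gt0 d_gt0 /=.
  have [z_pr|z_npr] /= := boolP (prime z); first by rewrite Euclid_dvdM // dvdn_prime2.
  by rewrite orbF; apply/esym/negbTE; apply: contra z_npr => /eqP ->.
rewrite /mobius !eqn0Ngt rd_gt0 d_gt0 /= /squarefreeb (perm_all _ primes_rd).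
rewrite (perm_size primes_rd) /=.
have -> : (logn r (r * d) == 1)%N.
  by rewrite lognM ?(prime_gt0 r_pr) // (logn_prime _ r_pr) eqxx logn_coprime // prime_coprime.
have -> : all (fun p => logn p (r * d) == 1)%N (primes d) =
          all (fun p => logn p d == 1)%N (primes d).
  apply: eq_in_all => z z_in; rewrite lognM ?(prime_gt0 r_pr) // logn_prime //.
  have /negbTE -> : z != r by apply: contraNneq r_notin => <-.
  by rewrite add0n.
by case: all; rewrite ?oppr0 // exprS mulN1r.
Qed.

Lemma mobiusM_prime_dvd r d : prime r -> (r %| d)%N -> mobius (r * d) = 0.
Proof.
move=> r_pr r_dvd_d; have [->|d_gt0] := posnP d; first by rewrite muln0.
have rd_gt0 : (0 < r * d)%N by rewrite muln_gt0 prime_gt0.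
rewrite /mobius eqn0Ngt rd_gt0 /= /squarefreeb.
case: allP => // sqfree; have := sqfree r.
rewrite mem_primes r_pr rd_gt0 dvdn_mulr // => /(_ isT).
rewrite lognM ?(prime_gt0 r_pr) // (logn_prime _ r_pr) eqxx add1n eqSS => /eqP logn0.
by move: (logn_gt0 r d); rewrite logn0 mem_primes r_pr d_gt0 r_dvd_d.
Qed.

Lemma sum_mobius_divisors n : (0 < n)%N ->
  \sum_(d <- divisors n) mobius d = (n == 1)%:R.
Proof.
move=> n_gt0; have [|n_gt1|->] := ltngtP n 1; first by rewrite ltnNge n_gt0.
  (* pair the divisors d and r * d, for r the least prime factor of n *)
  set r := pdiv n; have r_pr : prime r := pdiv_prime n_gt1.
  have r_dvd_n : (r %| n)%N := pdiv_dvd n.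
  rewrite (bigID (fun d => r %| d)%N) /= -big_filter -[X in _ + X]big_filter.
  rewrite (perm_big _ (perm_divisors_multiples (prime_gt0 r_pr) r_dvd_n n_gt0)).
  rewrite (perm_big _ (perm_divisors_prime_coprime r_pr r_dvd_n n_gt0)) big_map.
  rewrite big_filter [X in X + _](bigID (fun d => r %| d)%N) /= big1 ?add0r; last first.
    by move=> d; apply: mobiusM_prime_dvd.
  by rewrite (eq_bigr _ (fun d => mobiusM_prime_coprime r_pr)) sumrN addNr.
by rewrite big_seq1.
Qed.

Lemma sum_mobius_multiples c k : (c %| k)%N -> (0 < k)%N ->
  \sum_(d <- divisors k | (c %| d)%N) mobius (k %/ d) = (c == k)%:R.
Proof.
move=> c_dvd_k k_gt0; have c_gt0 := dvdn_gt0 k_gt0 c_dvd_k.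
have kc_gt0 : (0 < k %/ c)%N by rewrite divn_gt0 // dvdn_leq.
rewrite -big_filter (perm_big _ (perm_divisors_multiples c_gt0 c_dvd_k k_gt0)) big_map.
under eq_bigr do rewrite divnMA.
rewrite -(big_map (fun j => k %/ c %/ j)%N xpredT mobius).
rewrite (perm_big _ (perm_divisors_codivisors kc_gt0)) sum_mobius_divisors //.
congr (nat_of_bool _)%:R; apply/eqP/eqP => [kc1|->]; last by rewrite divnn k_gt0.
by rewrite -(divnK c_dvd_k) kc1 mul1n.
Qed.

Lemma mobius_inversion (f F : nat -> int) k :
  (forall m, (0 < m)%N -> F m = \sum_(d <- divisors m) f d) -> (0 < k)%N ->
  \sum_(d <- divisors k) mobius (k %/ d) * F d = f k.
Proof.
move=> defF k_gt0.
transitivity (\sum_(d <- divisors k)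
                \sum_(c <- divisors k | (c %| d)%N) mobius (k %/ d) * f c).
  apply: eq_big_seq => d; rewrite -dvdn_divisors // => d_dvd_k.
  rewrite defF ?(dvdn_gt0 k_gt0 d_dvd_k) // mulr_sumr.
  by rewrite -(perm_big _ (perm_divisors_dvd d_dvd_k k_gt0)) big_filter.
rewrite (exchange_big_dep xpredT) //=.
transitivity (\sum_(c <- divisors k) (c == k)%:R * f c).
  apply: eq_big_seq => c; rewrite -dvdn_divisors // => c_dvd_k.
  by rewrite -mulr_suml sum_mobius_multiples.
rewrite (bigD1_seq k) ?divisors_id ?divisors_uniq //= eqxx mul1r big1 ?addr0 //.
by move=> c /negbTE ->; rewrite mul0r.
Qed.

Theorem theorem1 (p q e k : nat) :
  prime p -> prime q -> p != q -> (0 < e)%N ->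
  coprime e (totient (p * q)) -> (0 < k)%N ->
  (#|Tset (p * q) e k|%:Z : int) =
    \sum_(d <- divisors k)
       mobius (k %/ d) * (gcdn (e ^ d - 1) (p - 1) * gcdn (e ^ d - 1) (q - 1))%N%:Z.
Proof.
move=> p_pr q_pr p_neq_q e_gt0 co_e k_gt0.
have n_gt2 : (2 < p * q)%N.
  by apply: (@leq_trans (2 * 2)); rewrite // leq_mul ?prime_gt1.
symmetry; apply: (@mobius_inversion (fun m => #|Tset (p * q) e m|%:Z)) k_gt0 => m m_gt0.
rewrite !subn1 -card_fixed_expn_pq ?expn_gt0 ?e_gt0 //.
by rewrite card_fixed_sum_Tset // (big_morph Posz PoszD (erefl _)).
Qed.
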